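(* Assume the setting in the context. Let $x_i,x_j,x_k\in X$ be distinct, and assume $x_k$ is neither a parent of $x_i$ nor a parent of $x_j$. If there exist $G_1,G_2\in\mathcal G$, $M\subseteq X\setminus\{x_i\}$ and $N\subseteq X\setminus\{x_i,x_j,x_k\}$ with $x_i-G_1(M)\perp\!\!\!\perp x_j-G_2(N\cup\{x_k\})$, then there exist $G_1',G_2'\in\mathcal G$, $M'\subseteq X\setminus\{x_i\}$ and $N'\subseteq X\setminus\{x_i,x_j,x_k\}$ with $x_i-G_1'(M')\perp\!\!\!\perp x_j-G_2'(N')$.
   Context: Model: $X$ is a finite set of observed random variables and $U$ a finite set of unobserved random variables; $V=X\cup U$ and $G=(V,E)$ is a DAG on $V$. Each $v_i\in V$ satisfies $v_i=\sum_{x_j\in \mathrm{pa}(v_i)\cap X} f^{(i)}_j(x_j)+\sum_{u_k\in\mathrm{pa}(v_i)\cap U} f^{(i)}_k(u_k)+n_i$, where the $f$'s are nonlinear functions and the external noises $n_i$ are jointly independent. ''Parent'', ''ancestor'', ''path'', ''d-separation'' refer to $G$ (a path has distinct vertices). Causal Faithfulness Condition (CFC): any conditional independence among variables of $V$ that is not entailed by d-separation in $G$ does not hold. $\perp\!\!\!\perp$ denotes statistical independence, $\not\perp\!\!\!\perp$ dependence. Function class: $\mathcal G$ is a class of generalized additive functions: for $G\in\mathcal G$ and a set $M$ of observed variables, $G(M)=\sum_{x_m\in M} g_m(x_m)$ (with $G(\emptyset)=0$). It satisfies: for any $x_i,x_j\in X$, sets $M,N\subseteq X$, $G_1,G_2\in\mathcal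 G$ and external noise $n_k$, if $n_k\not\perp\!\!\!\perp x_i-G_1(M)$ and $n_k\not\perp\!\!\!\perp x_j-G_2(N)$ then $x_i-G_1(M)\not\perp\!\!\!\perp x_j-G_2(N)$. Definitions, for $X'\subseteq X$ and $x_i,x_j\in X'$: an unobserved causal path (UCP) from $x_i$ to $x_j$ w.r.t. $X'$ is a directed path $x_i\to\cdots\to v_k\to x_j$ in $G$ with $v_k\notin X'$; an unobserved backdoor path (UBP) between $x_i$ and $x_j$ w.r.t. $X'$ is a path $x_i\leftarrow v_k\leftarrow\cdots\leftarrow v\to\cdots\to v_l\to x_j$ with $v_k,v_l\notin X'$ (allowing $v=v_k$, $v=v_l$, or $v=v_k=v_l$; $v$ may be in $X'$). ''UBP/UCP between $x_i$ and $x_j$'' means a UBP or a UCP in either direction. $x_j$ is a visible parent of $x_i$ w.r.t. $X'$ if $x_j$ is a parent of $x_i$ and there is no UBP/UCP between them w.r.t. $X'$; $(x_i,x_j)$ is a visible non-edge w.r.t. $X'$ if there is no edge between them and no UBP/UCP between them w.r.t. $X'$; $(x_i,x_j)$ is invisible w.r.t. $X'$ if there is a UBP/UCP between them w.r.t. $X'$. When $X'$ is omitted, $X'=X$. Standing facts (taken as known), for $X'\subseteq X$ and distinct $x_i,x_j\in X'$: (F1) $x_j$ is a visible parent of $x_i$ w.r.t. $X'$ iff [for all $G_1,G_2\in\mathcal G$, $M\subseteq X'\setminus\{x_i,x_j\}$, $N\subseteq X'\setminus\{x_j\}$: $x_i-G_1(M)\not\perp\!\!\!\perp x_j-G_2(N)$]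 and [there exist $G_1,G_2\in\mathcal G$, $M\subseteq X'\setminus\{x_i\}$, $N\subseteq X'\setminus\{x_i,x_j\}$ with $x_i-G_1(M)\perp\!\!\!\perp x_j-G_2(N)$]. (F2) $(x_i,x_j)$ is a visible non-edge w.r.t. $X'$ iff there exist $G_1,G_2\in\mathcal G$ and $M,N\subseteq X'\setminus\{x_i,x_j\}$ with $x_i-G_1(M)\perp\!\!\!\perp x_j-G_2(N)$. (F3) $(x_i,x_j)$ is invisible w.r.t. $X'$ iff for all $M\subseteq X'\setminus\{x_i\}$, $N\subseteq X'\setminus\{x_j\}$, $G_1,G_2\in\mathcal G$: $x_i-G_1(M)\not\perp\!\!\!\perp x_j-G_2(N)$. *)

From HB Require Import structures.
From mathcomp Require Import all_boot all_order all_algebra.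
From mathcomp Require Import all_classical all_reals all_analysis.
Set Implicit Arguments. Unset Strict Implicit. Unset Printing Implicit Defensive.
Import Order.TTheory GRing.Theory Num.Theory.
Local Open Scope ring_scope.

Section Defs.
Context {R : realType} {d : measure_display} {T : measurableType d}.
Context {V : finType}.

Definition indep (P : probability T R) (Y Z : T -> R) : Prop :=
  forall A B : set R, measurable A -> measurable B ->
    P (Y @^-1` A `&` Z @^-1` B)%classic = (P (Y @^-1` A)%classic * P (Z @^-1` B)%classic)%E.

Definition mutual_indep (P : probability T R) (n : V -> T -> R) : Prop :=
  forall B : V -> set R, (forall v, measurable (B v)) ->
    P [set t | forall v, B v (n v t)]%classic = (\prod_(v : V) P (n v @^-1` B v)%classic)%E.

Definition sigma_of (val : V -> T -> R) (A : {set V}) : set (set T) :=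
  smallest (sigma_algebra setT)
    [set e | exists a, a \in A /\ exists Bs : set R, measurable Bs /\ e = val a @^-1` Bs]%classic.

(* conditional independence  {val a}_{a in A}  _||_  {val b}_{b in B}  |  {val c}_{c in C}:
   for every event e in sigma(A) there is a sigma(C)-measurable version h of
   P(e | sigma(B u C)), i.e. P(e | B, C) = P(e | C). *)
Definition cond_indep (P : probability T R) (val : V -> T -> R)
    (A B C : {set V}) : Prop :=
  forall e, sigma_of val A e ->
    exists h : T -> R,
      (forall t, 0 <= h t <= 1) /\
      (forall Y : set R, measurable Y -> sigma_of val C (h @^-1` Y)%classic) /\
      (forall b c, sigma_of val B b -> sigma_of val C c ->
         (P (e `&` b `&` c)%classic = \int[P]_(t in (b `&` c)%classic) (h t)%:E)%E).

(** ---------- Graph notions (G = (V, E), E u v means u -> v) ---------- *)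

Definition acyclic (E : rel V) : Prop :=
  forall v : V, ~~ [exists w, E v w && connect E w v].

Definition adj (E : rel V) : rel V := fun u v => E u v || E v u.

Definition gpath (E : rel V) (a : V) (p : seq V) (b : V) : bool :=
  [&& uniq (a :: p), path (adj E) a p & last a p == b].

Definition blocked (E : rel V) (C : {set V}) (a : V) (p : seq V) : Prop :=
  let s := a :: p in
  exists i : nat, (0 < i)%N /\ (i.+1 < size s)%N /\
    let u := nth a s i.-1 in
    let w := nth a s i in
    let z := nth a s i.+1 in
    if E u w && E z w
    then ~~ [exists x, connect E w x && (x \in C)]
    else w \in C.

Definition dsep (E : rel V) (A B C : {set V}) : Prop :=
  forall a b (p : seq V), a \in A -> b \in B -> gpath E a p b -> blocked E C a p.

Definition additive_model (P : probability T R) (E : rel V)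
    (val n : V -> T -> R) (f : V -> V -> R -> R) : Prop :=
  [/\ acyclic E,
      (forall i t, val i t = \sum_(j | E j i) f i j (val j t) + n i t),
      (forall i j, E j i -> ~ exists a b : R, forall x, f i j x = a * x + b),
      [/\ (forall i j, measurable_fun setT (f i j)),
          (forall i, measurable_fun setT (n i)) &
          (forall i, measurable_fun setT (val i))]
    & mutual_indep P n].

Definition CFC (P : probability T R) (E : rel V) (val : V -> T -> R) : Prop :=
  forall A B C : {set V}, A != finset.set0 -> B != finset.set0 ->
    [disjoint A & B] -> [disjoint A & C] -> [disjoint B & C] ->
    cond_indep P val A B C -> dsep E A B C.

(* a member G of the class is given by its component functions g_m;
   G(M) = sum_{m in M} g_m(x_m);  residual x_i - G(M) *)
Definition resid (val : V -> T -> R) (i : V) (G : V -> R -> R) (M : {set V})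
    : T -> R :=
  fun t => val i t - \sum_(m in M) G m (val m t).

Definition gam_class (P : probability T R) (X : {set V}) (val n : V -> T -> R)
    (Gc : set (V -> R -> R)) : Prop :=
  (forall G, Gc G -> forall m, measurable_fun setT (G m)) /\
  (forall (xi xj : V) (M N : {set V}) G1 G2 (k : V),
     xi \in X -> xj \in X -> M \subset X -> N \subset X -> Gc G1 -> Gc G2 ->
     ~ indep P (n k) (resid val xi G1 M) -> ~ indep P (n k) (resid val xj G2 N) ->
     ~ indep P (resid val xi G1 M) (resid val xj G2 N)).

Definition ucp (E : rel V) (X' : {set V}) (a b : V) : Prop :=
  exists (vk : V) (p : seq V),
    [/\ path E a p, last a p = vk, E vk b, vk \notin X' & uniq (b :: a :: p)].

Definition ubp (E : rel V) (X' : {set V}) (a b : V) : Prop :=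
  exists (v vk vl : V) (p q : seq V),
    [/\ path E v p /\ last v p = vk, path E v q /\ last v q = vl,
        E vk a /\ E vl b, vk \notin X' /\ vl \notin X'
      & uniq (a :: b :: v :: p ++ q)].

Definition ubp_or_ucp (E : rel V) (X' : {set V}) (a b : V) : Prop :=
  ubp E X' a b \/ ubp E X' b a \/ ucp E X' a b \/ ucp E X' b a.

Definition visible_parent (E : rel V) (X' : {set V}) (xi xj : V) : Prop :=
  E xj xi /\ ~ ubp_or_ucp E X' xi xj.

Definition visible_nonedge (E : rel V) (X' : {set V}) (xi xj : V) : Prop :=
  ~~ E xi xj /\ ~~ E xj xi /\ ~ ubp_or_ucp E X' xi xj.

Definition invisible (E : rel V) (X' : {set V}) (xi xj : V) : Prop :=
  ubp_or_ucp E X' xi xj.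

(* Standing facts (F1), (F2), (F3) *)
Definition standing_facts (P : probability T R) (E : rel V) (X : {set V})
    (val : V -> T -> R) (Gc : set (V -> R -> R)) : Prop :=
  forall (X' : {set V}) (xi xj : V), X' \subset X -> xi \in X' -> xj \in X' -> xi != xj ->
  [/\ (visible_parent E X' xi xj <->
        (forall G1 G2 (M N : {set V}), Gc G1 -> Gc G2 ->
            M \subset X' :\: [set xi; xj] -> N \subset X' :\ xj ->
            ~ indep P (resid val xi G1 M) (resid val xj G2 N)) /\
        (exists G1 G2 (M N : {set V}), [/\ Gc G1, Gc G2,
            M \subset X' :\ xi, N \subset X' :\: [set xi; xj] &
            indep P (resid val xi G1 M) (resid val xj G2 N)])),
      (visible_nonedge E X' xi xj <->
        exists G1 G2 (M N : {set V}), [/\ Gc G1, Gc G2,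
            M \subset X' :\: [set xi; xj], N \subset X' :\: [set xi; xj] &
            indep P (resid val xi G1 M) (resid val xj G2 N)])
    & (invisible E X' xi xj <->
        forall G1 G2 (M N : {set V}), Gc G1 -> Gc G2 ->
          M \subset X' :\ xi -> N \subset X' :\ xj ->
          ~ indep P (resid val xi G1 M) (resid val xj G2 N))].

End Defs.

From HB Require Import structures.
From mathcomp Require Import all_boot all_order all_algebra.
From mathcomp Require Import all_classical all_reals all_analysis.
From mathcomp Require Import fintype finset.
Local Open Scope ring_scope.
Set Implicit Arguments.

(* The witness rules out a UBP/UCP between x_i and x_j w.r.t. X by (F3), and
   rules out x_i -> x_j by (F1) applied to the pair (x_j, x_i).  Since x_k is a
   parent of neither, every UBP/UCP w.r.t. X \ {x_k} is one w.r.t. X, so w.r.t.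
   X \ {x_k} the pair is either a visible parent x_j -> x_i or a visible
   non-edge, and (F1) resp. (F2) produce residuals that no longer mention x_k. *)

Lemma indepC (R : realType) (d : measure_display) (T : measurableType d)
  (P : probability T R) (Y Z : T -> R) : indep P Y Z -> indep P Z Y.
Proof. by move=> hYZ A B mA mB; rewrite classical_sets.setIC hYZ // muleC. Qed.

Section UnobservedPaths.
Variables (V : finType) (E : rel V) (X' : {set V}).

Lemma ubp_or_ucpC a b : ubp_or_ucp E X' a b -> ubp_or_ucp E X' b a.
Proof. by rewrite /ubp_or_ucp; tauto. Qed.

Lemma notin_setD1_parent k v w :
  ~~ E k w -> E v w -> v \notin X' :\ k -> v \notin X'.
Proof.
move=> nEkw Evw; rewrite in_setD1 negb_and negbK => /orP[/eqP vk|//].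
by rewrite -vk Evw in nEkw.
Qed.

Lemma ucp_setD1 k a b : ~~ E k b -> ucp E (X' :\ k) a b -> ucp E X' a b.
Proof.
move=> nEkb [vk [p [Ep lastp Evkb vkX uniqp]]]; exists vk, p; split => //.
exact: notin_setD1_parent nEkb Evkb vkX.
Qed.

Lemma ubp_setD1 k a b :
  ~~ E k a -> ~~ E k b -> ubp E (X' :\ k) a b -> ubp E X' a b.
Proof.
move=> nEka nEkb [v [vk [vl [p [q [Pp Pq [Evka Evlb] [vkX vlX] uniqpq]]]]]].
exists v, vk, vl, p, q; split => //; split.
- exact: notin_setD1_parent nEka Evka vkX.
- exact: notin_setD1_parent nEkb Evlb vlX.
Qed.

Lemma ubp_or_ucp_setD1 k a b : ~~ E k a -> ~~ E k b ->
  ubp_or_ucp E (X' :\ k) a b -> ubp_or_ucp E X' a b.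
Proof.
move=> nEka nEkb [h|[h|[h|h]]].
- by left; apply: ubp_setD1 h.
- by right; left; apply: ubp_setD1 h.
- by right; right; left; apply: ucp_setD1 h.
- by right; right; right; apply: ucp_setD1 h.
Qed.

End UnobservedPaths.

Section StandingFacts.
Variables (R : realType) (d : measure_display) (T : measurableType d).
Variables (P : probability T R) (V : finType) (E : rel V) (X : {set V}).
Variables (val : V -> T -> R) (Gc : set (V -> R -> R)).
Hypothesis facts : standing_facts P E X val Gc.

Variables (X' : {set V}) (xi xj : V).
Hypotheses (sX'X : X' \subset X) (xiX' : xi \in X') (xjX' : xj \in X').
Hypothesis neq_ij : xi != xj.

Lemma not_invisible_of_indep G1 G2 (M N : {set V}) :
  Gc G1 -> Gc G2 -> M \subset X' :\ xi -> N \subset X' :\ xj ->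
  indep P (resid val xi G1 M) (resid val xj G2 N) -> ~ ubp_or_ucp E X' xi xj.
Proof.
move=> G1c G2c sM sN hind inv.
have [_ _ [F3 _]] := facts sX'X xiX' xjX' neq_ij.
exact: F3 inv G1 G2 M N G1c G2c sM sN hind.
Qed.

Lemma not_parent_of_indep G1 G2 (M N : {set V}) :
  Gc G1 -> Gc G2 -> M \subset X' :\ xi -> N \subset X' :\: [set xi; xj] ->
  indep P (resid val xi G1 M) (resid val xj G2 N) -> ~~ E xi xj.
Proof.
move=> G1c G2c sM sN hind; apply/negP => Eij.
have sNj : N \subset X' :\ xj.
  by apply: (subset_trans sN); apply: setDS; rewrite sub1set !inE eqxx orbT.
have vis : visible_parent E X' xj xi.
  by split=> // /ubp_or_ucpC; apply: not_invisible_of_indep hind.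
have neq_ji : xj != xi by rewrite eq_sym.
have [[F1 _] _ _] := facts sX'X xjX' xiX' neq_ji.
have [allDep _] := F1 vis.
apply: (allDep G2 G1 N M G2c G1c _ sM (indepC hind)).
by rewrite setUC.
Qed.

Lemma exists_indep_resid :
  ~~ E xi xj -> ~ ubp_or_ucp E X' xi xj ->
  exists G1 G2 (M N : {set V}),
    [/\ Gc G1, Gc G2, M \subset X' :\ xi, N \subset X' :\: [set xi; xj] &
        indep P (resid val xi G1 M) (resid val xj G2 N)].
Proof.
move=> nEij vis; have [[F1 _] [F2 _] _] := facts sX'X xiX' xjX' neq_ij.
case Eji: (E xj xi); first exact: (F1 (conj Eji vis)).2.
have nonedge : visible_nonedge E X' xi xj by rewrite /visible_nonedge nEij Eji.
have [G1 [G2 [M [N [G1c G2c sM sN hind]]]]] := F2 nonedge.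
exists G1, G2, M, N; split => //.
by apply: (subset_trans sM); apply: setDS; rewrite sub1set !inE eqxx.
Qed.

End StandingFacts.

Theorem proposition3 (R : realType) (d : measure_display) (T : measurableType d)
  (P : probability T R) (V : finType) (E : rel V) (X : {set V})
  (val n : V -> T -> R) (f : V -> V -> R -> R) (Gc : set (V -> R -> R))
  (Hmodel : additive_model P E val n f)
  (Hcfc : CFC P E val)
  (Hgam : gam_class P X val n Gc)
  (Hfacts : standing_facts P E X val Gc)
  (xi xj xk : V)
  (Hxi : xi \in X) (Hxj : xj \in X) (Hxk : xk \in X)
  (Hij : xi != xj) (Hik : xi != xk) (Hjk : xj != xk)
  (Hki : ~~ E xk xi) (Hkj : ~~ E xk xj) :
  (exists G1 G2 (M N : {set V}),
     [/\ Gc G1, Gc G2, M \subset X :\ xi, N \subset X :\: [set xi; xj; xk] &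
         indep P (resid val xi G1 M) (resid val xj G2 (xk |: N))]) ->
  exists G1' G2' (M' N' : {set V}),
     [/\ Gc G1', Gc G2', M' \subset X :\ xi, N' \subset X :\: [set xi; xj; xk] &
         indep P (resid val xi G1' M') (resid val xj G2' N')].
Proof.
move=> [G1 [G2 [M [N [G1c G2c sM sN hind]]]]].
have sNk : xk |: N \subset X :\: [set xi; xj].
  rewrite subUset sub1set !inE Hxk negb_or eq_sym Hik eq_sym Hjk /=.
  apply: (subset_trans sN); apply: setDS.
  by rewrite subUset !sub1set !inE !eqxx !orbT.
have nEij :=
  not_parent_of_indep Hfacts (subxx X) Hxi Hxj Hij G1c G2c sM sNk hind.
have nvis : ~ ubp_or_ucp E (X :\ xk) xi xj.
  move=> /(ubp_or_ucp_setD1 Hki Hkj); apply: (not_invisible_of_indep Hfacts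
    (subxx X) Hxi Hxj Hij G1c G2c sM _ hind).
  apply: (subset_trans sNk); apply: setDS.
  by rewrite sub1set !inE eqxx orbT.
have [||G1' [G2' [M' [N' [G1c' G2c' sM' sN' hind']]]]] :=
  exists_indep_resid Hfacts (subD1set X xk) _ _ Hij nEij nvis.
- by rewrite !inE Hik.
- by rewrite !inE Hjk.
exists G1', G2', M', N'; split => //.
- by apply: (subset_trans sM'); apply: setSD; apply: subD1set.
- apply: (subset_trans sN'); apply/subsetP => x; rewrite !inE.
  by case: (x == xi); case: (x == xj); case: (x == xk).
Qed.
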